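(* Let $\Phi$ be a root system of rank $r$ and $0\le k\le r$. The $k$-step good root subsystems of $\Phi$ are exactly the closed root subsystems of $\Phi$ of rank $r-k$ that are maximal with respect to inclusion among all closed root subsystems of $\Phi$ of rank $r-k$.
   Context: Root systems are reduced and crystallographic. A root subsystem $\Psi\subseteq\Phi$ is closed if $\lambda,\mu\in\Psi$, $\lambda+\mu\in\Phi$ imply $\lambda+\mu\in\Psi$; $\operatorname{rk}\Psi=\dim\operatorname{Span}\Psi$. A good root subsystem of a root system $\Theta$ of rank $m$ is a closed root subsystem of rank $m-1$ maximal under inclusion among closed root subsystems of $\Theta$ of rank $m-1$. The $0$-step good root subsystem of $\Phi$ is $\Phi$ itself; for $k\ge1$, a $k$-step good root subsystem of $\Phi$ is a good root subsystem of some $(k-1)$-step good root subsystem of $\Phi$ (viewed as a root system in its own right). *)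

From HB Require Import structures.
From mathcomp Require Import all_boot all_order all_algebra.
Set Implicit Arguments. Unset Strict Implicit. Unset Printing Implicit Defensive.
Import Order.TTheory GRing.Theory Num.Theory.
Local Open Scope ring_scope.

Section RootSystems.
Variables (R : realFieldType) (n : nat).
Notation V := 'rV[R]_n.

Definition dotv (u v : V) : R := (u *m v^T) 0 0.

Definition cartan (b a : V) : R := 2 * dotv b a / dotv a a.

Definition refl (a b : V) : V := b - cartan b a *: a.

(* A (finite) set of vectors, given by a list (only membership matters),
   is a reduced crystallographic root system (not required to span V). *)
Definition root_system (Phi : seq V) : Prop :=
  [/\ (0 : V) \notin Phi,
      {in Phi &, forall a b, refl a b \in Phi},
      {in Phi &, forall a b, exists z : int, cartan b a = z%:~R} &
      {in Phi, forall a (c : R), c *: a \in Phi -> c = 1 \/ c = -1}].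

Definition rk (Phi : seq V) : nat := \dim <<Phi>>%VS.

Definition root_subsystem (Theta Psi : seq V) : Prop :=
  {subset Psi <= Theta} /\ root_system Psi.

Definition closed_subsystem (Theta Psi : seq V) : Prop :=
  root_subsystem Theta Psi /\
  {in Psi &, forall a b, a + b \in Theta -> a + b \in Psi}.

Definition maximal_closed_of_rank (Theta : seq V) (m : nat) (Psi : seq V) : Prop :=
  [/\ closed_subsystem Theta Psi, rk Psi = m &
      forall Psi' : seq V, closed_subsystem Theta Psi' -> rk Psi' = m ->
        {subset Psi <= Psi'} -> {subset Psi' <= Psi}].

Definition good_subsystem (Theta Psi : seq V) : Prop :=
  (rk Psi).+1 = rk Theta /\ maximal_closed_of_rank Theta (rk Psi) Psi.

Fixpoint kstep_good (k : nat) (Phi Psi : seq V) : Prop :=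
  match k with
  | 0 => Psi =i Phi
  | k'.+1 => exists Theta : seq V, kstep_good k' Phi Theta /\ good_subsystem Theta Psi
  end.

End RootSystems.

From HB Require Import structures.
From mathcomp Require Import all_boot all_order all_algebra.
From mathcomp Require Import zify.
From Stdlib Require Import Classical.
Set Implicit Arguments. Unset Strict Implicit. Unset Printing Implicit Defensive.
Import Order.TTheory GRing.Theory Num.Theory.
Local Open Scope ring_scope.

(* A closed subsystem that is maximal among closed subsystems of its rank is
   saturated: it contains every root of Phi lying in its span, because the
   roots of Phi in any subspace form a closed subsystem.  So if Psi is good in
   a maximal Theta, a closed Psi' of Phi of the same rank containing Psi has
   the span of Psi, hence lies in the span of Theta, hence in Theta, and the
   maximality of Psi in Theta applies.  Conversely, for a maximal Psi of rank
   r - k - 1, a root a outside the span of Psi cuts out from Phi a closed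
   subsystem of rank r - k containing Psi; a maximal one above it is k-step
   good by induction, and Psi is good in it. *)

Lemma count_mem_lt (T : eqType) (X Y S : seq T) y :
  {subset X <= Y} -> y \in S -> y \in Y -> y \notin X ->
  (count (mem X) S < count (mem Y) S)%N.
Proof.
move=> XY yS yY yX; rewrite !(permP (perm_to_rem yS)) /= yY (negPf yX).
by rewrite add0n add1n ltnS sub_count.
Qed.

Lemma exists_maximal_subset (T : eqType) (S : seq T) (P : seq T -> Prop) X0 :
  (forall X, P X -> {subset X <= S}) -> P X0 ->
  exists X, [/\ P X, {subset X0 <= X} &
                forall Y, P Y -> {subset X <= Y} -> {subset Y <= X}].
Proof.
move=> PS; have [N] := ubnP (size S - count (mem X0) S)%N.
elim: N X0 => // N IH X0 ltN PX0.
have [[Y [PY X0Y [y yY yX0]]] | noY] := classic (exists Y,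
  [/\ P Y, {subset X0 <= Y} & exists2 y, y \in Y & y \notin X0]).
  2: exists X0; split=> // Y PY X0Y y yY; apply: contraT => yX0.
  2: by case: noY; exists Y; split=> //; exists y.
have ltXY := count_mem_lt X0Y (PS Y PY y yY) yY yX0.
have leYS := count_size (mem Y) S.
have [X [PX YX maxX]] : exists X, [/\ P X, {subset Y <= X} &
    forall Z, P Z -> {subset X <= Z} -> {subset Z <= X}].
  by apply: IH => //; lia.
by exists X; split=> // x /X0Y /YX.
Qed.

Section ClosedSubsystems.
Variables (R : realFieldType) (n : nat).
Notation V := 'rV[R]_n.
Implicit Types (Phi Theta Psi : seq V) (W : {vspace V}).

Lemma root_system_eq_mem Phi Psi :
  Psi =i Phi -> root_system Phi -> root_system Psi.
Proof.
move=> eqPsi [Phi0 reflPhi cartanPhi reducedPhi]; split.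
- by rewrite eqPsi.
- by move=> a b; rewrite !eqPsi => aPhi bPhi; apply: reflPhi.
- by move=> a b; rewrite !eqPsi; apply: cartanPhi.
- by move=> a; rewrite eqPsi => aPhi c; rewrite eqPsi; apply: reducedPhi.
Qed.

Lemma closed_subsystem_refl Phi : root_system Phi -> closed_subsystem Phi Phi.
Proof. by move=> rsPhi; split; [split|] => // a b _ _. Qed.

Lemma closed_subsystem_trans Phi Theta Psi :
  closed_subsystem Phi Theta -> closed_subsystem Theta Psi ->
  closed_subsystem Phi Psi.
Proof.
move=> [[ThetaPhi _] clTheta] [[PsiTheta rsPsi] clPsi].
split=> [|a b aPsi bPsi abPhi]; first by split=> // x /PsiTheta /ThetaPhi.
by apply: clPsi => //; apply: clTheta => //; apply: PsiTheta.
Qed.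

Lemma closed_subsystem_sub Phi Theta Psi :
  {subset Theta <= Phi} -> {subset Psi <= Theta} ->
  closed_subsystem Phi Psi -> closed_subsystem Theta Psi.
Proof.
move=> ThetaPhi PsiTheta [[_ rsPsi] clPsi]; split=> // a b aPsi bPsi abTheta.
exact/clPsi/ThetaPhi.
Qed.

Definition restr Phi W := [seq x <- Phi | x \in W].

Lemma mem_restr Phi W x : (x \in restr Phi W) = (x \in Phi) && (x \in W).
Proof. by rewrite mem_filter andbC. Qed.

Lemma closed_subsystem_restr Phi W :
  root_system Phi -> closed_subsystem Phi (restr Phi W).
Proof.
move=> [Phi0 reflPhi cartanPhi reducedPhi]; split; [split; [|split]|].
- by move=> x; rewrite mem_restr => /andP[].
- by rewrite mem_restr (negPf Phi0).
- move=> a b; rewrite !mem_restr => /andP[aPhi aW] /andP[bPhi bW].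
  by rewrite reflPhi //= memvB // memvZ.
- move=> a b; rewrite !mem_restr => /andP[aPhi _] /andP[bPhi _].
  exact: cartanPhi.
- move=> a; rewrite mem_restr => /andP[aPhi _] c.
  rewrite mem_restr => /andP[caPhi _]; exact: (reducedPhi a aPhi c caPhi).
- move=> a b; rewrite !mem_restr => /andP[_ aW] /andP[_ bW] ->.
  by rewrite memvD.
Qed.

Lemma rk_restr_span Phi Psi :
  {subset Psi <= Phi} -> rk (restr Phi <<Psi>>) = rk Psi.
Proof.
move=> PsiPhi; rewrite /rk; congr (\dim _); apply/eqP; rewrite eqEsubv.
apply/andP; split; first by apply/span_subvP => x; rewrite mem_restr => /andP[].
by apply/span_subvP => x xPsi; rewrite memv_span // mem_restr PsiPhi ?memv_span.
Qed.

Lemma span_subset_rk_eq Psi Psi' :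
  {subset Psi <= Psi'} -> rk Psi' = rk Psi -> (<<Psi'>> <= <<Psi>>)%VS.
Proof.
move=> PsiPsi' rkPsi'; rewrite -(geq_leqif (dimv_leqif_sup (sub_span PsiPsi'))).
by rewrite -/(rk _) -/(rk _) rkPsi'.
Qed.

Lemma rk_cons_notin a Psi : a \notin <<Psi>>%VS -> rk (a :: Psi) = (rk Psi).+1.
Proof.
move=> aPsi; apply/eqP; rewrite eqn_leq; apply/andP; split.
  rewrite /rk span_cons (leq_trans (dimv_add_leqif _ _)) // dim_vline.
  by case: (a != 0).
have PsiaPsi : {subset Psi <= a :: Psi} by move=> x xPsi; rewrite inE xPsi orbT.
rewrite /rk (ltn_leqif (dimv_leqif_sup (sub_span PsiaPsi))).
by apply: contra aPsi => /subvP; apply; rewrite memv_span ?mem_head.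
Qed.

Lemma maximal_closed_saturated Phi m Psi :
  root_system Phi -> maximal_closed_of_rank Phi m Psi ->
  {in Phi, forall x, x \in <<Psi>>%VS -> x \in Psi}.
Proof.
move=> rsPhi [[[PsiPhi _] _] rkPsi maxPsi] x xPhi xPsi.
have PsiRestr : {subset Psi <= restr Phi <<Psi>>}.
  by move=> y yPsi; rewrite mem_restr PsiPhi ?memv_span.
apply: (maxPsi _ (closed_subsystem_restr <<Psi>>%VS rsPhi)) => //.
  by rewrite rk_restr_span.
by rewrite mem_restr xPhi.
Qed.

Lemma good_in_maximal_is_maximal Phi Theta Psi m :
  root_system Phi -> maximal_closed_of_rank Phi m Theta ->
  good_subsystem Theta Psi -> maximal_closed_of_rank Phi (rk Psi) Psi.
Proof.
move=> rsPhi maxTheta [_ [clPsi _ maxPsi]].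
have satTheta := maximal_closed_saturated rsPhi maxTheta.
have [clTheta _ _] := maxTheta; have [[ThetaPhi _] _] := clTheta.
have [[PsiTheta _] _] := clPsi.
split=> // [|Psi' clPsi' rkPsi' PsiPsi'].
  exact: closed_subsystem_trans clPsi.
have [[Psi'Phi _] _] := clPsi'.
have Psi'Theta : {subset Psi' <= Theta}.
  move=> x xPsi'; apply: satTheta; first exact: Psi'Phi.
  apply: subvP (sub_span PsiTheta) _ _.
  by apply: subvP (span_subset_rk_eq PsiPsi' rkPsi') _ _; rewrite memv_span.
exact/maxPsi/PsiPsi'/rkPsi'/closed_subsystem_sub/clPsi'.
Qed.

Lemma maximal_in_maximal_is_good Phi Theta Psi :
  maximal_closed_of_rank Phi (rk Psi) Psi -> closed_subsystem Phi Theta ->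
  {subset Psi <= Theta} -> (rk Psi).+1 = rk Theta ->
  good_subsystem Theta Psi.
Proof.
move=> [clPsi _ maxPsi] clTheta PsiTheta rkTheta.
have [[ThetaPhi _] _] := clTheta.
split=> //; split=> // [|Psi' clPsi' rkPsi' PsiPsi'].
  exact: closed_subsystem_sub clPsi.
exact/maxPsi/PsiPsi'/rkPsi'/closed_subsystem_trans/clPsi'.
Qed.

Lemma maximal_closed_of_full_rankE Phi Psi :
  root_system Phi -> maximal_closed_of_rank Phi (rk Phi) Psi <-> Psi =i Phi.
Proof.
move=> rsPhi; split=> [[[[PsiPhi _] _] _ maxPsi] x | eqPsi].
  apply/idP/idP=> [/PsiPhi // |].
  exact: (maxPsi Phi (closed_subsystem_refl rsPhi) erefl PsiPhi).
split; last by move=> Psi' [[Psi'Phi _] _] _ _ x /Psi'Phi; rewrite eqPsi.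
  split=> [|a b aPsi bPsi]; last by rewrite eqPsi.
  by split=> [x|]; [rewrite eqPsi | apply: root_system_eq_mem rsPhi].
by rewrite /rk (eq_span eqPsi).
Qed.

Lemma exists_maximal_closed_of_rank Phi Theta0 :
  closed_subsystem Phi Theta0 ->
  exists Theta,
    maximal_closed_of_rank Phi (rk Theta0) Theta /\ {subset Theta0 <= Theta}.
Proof.
move=> clTheta0.
have [Theta [[clTheta rkTheta] Theta0Theta maxTheta]] :=
  exists_maximal_subset
    (P := fun X => closed_subsystem Phi X /\ rk X = rk Theta0)
    (fun X '(conj (conj (conj XPhi _) _) _) => XPhi) (conj clTheta0 erefl).
by exists Theta; split=> //; split=> // Psi clPsi rkPsi; apply: maxTheta.
Qed.

Lemma exists_notin_span Phi Psi : (rk Psi < rk Phi)%N ->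
  exists2 a, a \in Phi & a \notin <<Psi>>%VS.
Proof.
move=> ltPsiPhi; apply/hasP; rewrite -[has _ _]negbK; apply: contraL ltPsiPhi.
rewrite -all_predC => /allP PhiPsi; rewrite -leqNgt /rk dimvS //.
by apply/span_subvP => x /PhiPsi /negbNE.
Qed.

End ClosedSubsystems.

Theorem mainTheorem11 (R : realFieldType) (n : nat) (Phi : seq 'rV[R]_n)
  (k : nat) :
  root_system Phi -> (k <= rk Phi)%N ->
  forall Psi : seq 'rV[R]_n,
    kstep_good k Phi Psi <-> maximal_closed_of_rank Phi (rk Phi - k) Psi.
Proof.
move=> rsPhi; elim: k => [|k IH] le_k_rk Psi.
  by rewrite subn0 maximal_closed_of_full_rankE.
have IHk := IH (ltnW le_k_rk).
split=> [[Theta [/IHk maxTheta goodPsi]] | maxPsi].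
  have [rkTheta _] := goodPsi; have [_ rkThetaPhi _] := maxTheta.
  have -> : (rk Phi - k.+1 = rk Psi)%N by lia.
  exact: good_in_maximal_is_maximal maxTheta goodPsi.
have [[[PsiPhi _] _] rkPsi _] := maxPsi.
have [a aPhi aPsi] : exists2 a, a \in Phi & a \notin <<Psi>>%VS.
  by apply: exists_notin_span; lia.
have [Theta [maxTheta Theta0Theta]] :=
  exists_maximal_closed_of_rank (closed_subsystem_restr <<a :: Psi>>%VS rsPhi).
have [clTheta rkTheta _] := maxTheta.
have aPsiPhi : {subset a :: Psi <= Phi}.
  by apply/allP; rewrite /= aPhi; apply/allP.
rewrite rk_restr_span // rk_cons_notin // in maxTheta rkTheta.
have rkTheta_eq : (rk Psi).+1 = (rk Phi - k)%N by lia.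
exists Theta; split; first by apply/IHk; rewrite -rkTheta_eq.
apply: maximal_in_maximal_is_good clTheta _ (esym rkTheta).
  by rewrite rkPsi.
move=> x xPsi; apply/Theta0Theta.
by rewrite mem_restr PsiPhi // memv_span // inE xPsi orbT.
Qed.
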